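(* Let $U_1,U_2,U_3,U_4$ be subspaces of a vector space $V$. If for each $j\in\{3,4\}$ we have $U_1\cap U_2\subseteq U_j$ and $U_j=U_j\cap U_1+U_j\cap U_2$, then $$U_3\cap U_4=U_3\cap U_4\cap U_1+U_3\cap U_4\cap U_2.$$ *)

From mathcomp Require Import all_boot all_algebra.
Set Implicit Arguments. Unset Strict Implicit. Unset Printing Implicit Defensive.
Import GRing.Theory.
Local Open Scope ring_scope.

Definition is_subspace (K : fieldType) (V : lmodType K) (U : V -> Prop) : Prop :=
  [/\ U 0, (forall u w, U u -> U w -> U (u + w))
     & (forall (a : K) u, U u -> U (a *: u))].

Definition sp_cap (V : Type) (A B : V -> Prop) : V -> Prop := fun v => A v /\ B v.

Definition sp_add (K : fieldType) (V : lmodType K) (A B : V -> Prop) : V -> Prop :=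
  fun v => exists a b, [/\ A a, B b & v = a + b].

Definition sp_sub (V : Type) (A B : V -> Prop) : Prop := forall v, A v -> B v.
Definition sp_eq (V : Type) (A B : V -> Prop) : Prop := forall v, A v <-> B v.

From mathcomp Require Import all_boot all_algebra.
Set Implicit Arguments. Unset Strict Implicit. Unset Printing Implicit Defensive.
Import GRing.Theory.
Local Open Scope ring_scope.

(* Write v in U3 ∩ U4 as a + b with a in U3 ∩ U1 and b in U3 ∩ U2.  Writing
   also v = a' + b' along U4, the difference a - a' = b' - b lies in
   U1 ∩ U2 ⊆ U4; hence a, and then b = v - a, lie in U4. *)

Section Subspaces.

Variables (K : fieldType) (V : lmodType K).
Implicit Types (U W : V -> Prop) (u w : V).

Lemma subspaceD U u w : is_subspace U -> U u -> U w -> U (u + w).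
Proof. by case=> _ + _; apply. Qed.

Lemma subspaceN U u : is_subspace U -> U u -> U (- u).
Proof. by case=> _ _ hZ hu; rewrite -scaleN1r; apply: hZ. Qed.

Lemma subspaceB U u w : is_subspace U -> U u -> U w -> U (u - w).
Proof. by move=> hU hu hw; apply: subspaceD => //; apply: subspaceN. Qed.

Lemma sp_add_subl (U1 U2 W : V -> Prop) :
  is_subspace W -> sp_sub U1 W -> sp_sub U2 W -> sp_sub (sp_add U1 U2) W.
Proof. by move=> hW s1 s2 _ [a [b [/s1 ha /s2 hb ->]]]; apply: subspaceD. Qed.

Lemma is_subspace_cap U W :
  is_subspace U -> is_subspace W -> is_subspace (sp_cap U W).
Proof.
move=> hU hW; case: (hU) (hW) => [? _ hZU] [? _ hZW].
split=> [//|u w [? ?] [? ?]|c u [? ?]]; split; by [apply: subspaceD | auto].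
Qed.

Lemma sp_capKl U W : sp_sub (sp_cap U W) U.
Proof. by move=> v []. Qed.

Lemma split_summands (U1 U2 W : V -> Prop) a b :
  is_subspace U1 -> is_subspace U2 -> is_subspace W ->
  sp_sub (sp_cap U1 U2) W -> sp_sub W (sp_add (sp_cap W U1) (sp_cap W U2)) ->
  U1 a -> U2 b -> W (a + b) -> W a /\ W b.
Proof.
move=> h1 h2 hW s12 splitW ha hb hab.
have [a' [b' [[ha'W ha'1] [_ hb'2] eab]]] := splitW _ hab.
have diff12 : sp_cap U1 U2 (a - a').
  split; first exact: subspaceB.
  have -> : a - a' = b' - b.
    by apply/eqP; rewrite subr_eq addrAC [b' + a']addrC -eab addrK.
  exact: subspaceB.
have haW : W a by rewrite -(subrK a' a); apply: subspaceD => //; apply: s12.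
by split=> //; rewrite -(addKr a b); apply: subspaceD => //; apply: subspaceN.
Qed.

End Subspaces.

Theorem lemma4p2 (K : fieldType) (V : lmodType K) (U1 U2 U3 U4 : V -> Prop) :
  is_subspace U1 -> is_subspace U2 -> is_subspace U3 -> is_subspace U4 ->
  sp_sub (sp_cap U1 U2) U3 ->
  sp_eq U3 (sp_add (sp_cap U3 U1) (sp_cap U3 U2)) ->
  sp_sub (sp_cap U1 U2) U4 ->
  sp_eq U4 (sp_add (sp_cap U4 U1) (sp_cap U4 U2)) ->
  sp_eq (sp_cap U3 U4)
        (sp_add (sp_cap (sp_cap U3 U4) U1) (sp_cap (sp_cap U3 U4) U2)).
Proof.
move=> h1 h2 h3 h4 _ e3 s4 e4 v; split.
- case=> /e3 [a [b [[ha3 ha1] [hb3 hb2] ->]]] hv4.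
  have [ha4 hb4] := split_summands h1 h2 h4 s4 (fun w => (e4 w).1) ha1 hb2 hv4.
  by exists a, b.
- by apply: sp_add_subl; [apply: is_subspace_cap | apply: sp_capKl..].
Qed.
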